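(* Let $T$ be a tree with exactly four pendant vertices $u_1,u_2,u_3,u_4$ and exactly two major vertices $m_1\ne m_2$, such that $T$ is the union of the paths $P_{u_1,m_1}$, $P_{u_2,m_1}$, $P_{m_1,m_2}$, $P_{u_3,m_2}$, $P_{u_4,m_2}$, where $P_{u_1,m_1}$ and $P_{u_2,m_1}$ are glued to $P_{m_1,m_2}$ at $m_1$, and $P_{u_3,m_2}$ and $P_{u_4,m_2}$ are glued at $m_2$ (these five paths being otherwise disjoint). If $m(T,1)\ge 2$, then $d(u_1,m_1)\equiv d(u_2,m_1)\equiv 1\pmod 3$ or $d(u_3,m_2)\equiv d(u_4,m_2)\equiv 1\pmod 3$.
   Context: $m(T,\lambda)$ denotes the multiplicity of $\lambda$ as an eigenvalue of the Laplacian matrix $L(T)=D(T)-A(T)$. A pendant vertex has degree $1$; a major vertex has degree at least $3$. $P_{r,s}$ is the path from $r$ to $s$; $d$ denotes distance. *)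

From mathcomp Require Import all_boot all_order all_algebra.
Set Implicit Arguments. Unset Strict Implicit. Unset Printing Implicit Defensive.
Import GRing.Theory Num.Theory.

Definition simple_graph (n : nat) (e : rel 'I_n) : Prop :=
  symmetric e /\ irreflexive e.

(* Tree: connected simple graph with n - 1 edges (each edge counted twice
   in the set of ordered adjacent pairs). *)
Definition is_tree (n : nat) (e : rel 'I_n) : Prop :=
  [/\ simple_graph e, (forall x y, connect e x y)
    & #|[set p : 'I_n * 'I_n | e p.1 p.2]| = (2 * n.-1)%N].

Definition degree (n : nat) (e : rel 'I_n) (x : 'I_n) : nat :=
  #|[set y | e x y]|.

Definition pendant (n : nat) (e : rel 'I_n) (x : 'I_n) : bool :=
  degree e x == 1%N.
Definition major (n : nat) (e : rel 'I_n) (x : 'I_n) : bool :=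
  (3 <= degree e x)%N.

Fixpoint reach (n : nat) (e : rel 'I_n) (k : nat) (x y : 'I_n) : bool :=
  match k with
  | 0 => x == y
  | k'.+1 => reach e k' x y || [exists z, e x z && reach e k' z y]
  end.

(* Graph distance (correct for connected graphs, where it is < n). *)
Definition dist (n : nat) (e : rel 'I_n) (x y : 'I_n) : nat :=
  find (fun k => reach e k x y) (iota 0 n).

(* Vertex set of the (unique) path P_{r,s} in a tree. *)
Definition path_set (n : nat) (e : rel 'I_n) (r s : 'I_n) : {set 'I_n} :=
  [set x | (dist e r x + dist e x s == dist e r s)%N].

Definition laplacian (n : nat) (e : rel 'I_n) : 'M[rat]_n :=
  \matrix_(i, j) (if i == j then ((degree e i)%:R)%R
                  else if e i j then (-1)%R else 0%R).

(* m(T, lambda): multiplicity of lambda as an eigenvalue of L(T)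
   (as a root of the characteristic polynomial; L is symmetric, so this
   equals the geometric multiplicity). *)
Definition eig_mult (n : nat) (e : rel 'I_n) (lam : rat) : nat :=
  mup lam (char_poly (laplacian e)).

From mathcomp Require Import all_boot all_order all_algebra algC.
From mathcomp Require Import zify ring.
Set Implicit Arguments. Unset Strict Implicit. Unset Printing Implicit Defensive.
Import GRing.Theory Num.Theory.

(* If m(T,1) >= 2, the 1-eigenspace of the symmetric matrix L(T) has dimension
   at least 2, so for every vertex v it contains a nonzero x with x(v) = 0.
   The eigen-equation at y reads (deg y - 1) x(y) = sum of x over the
   neighbours of y.  Along a pendant arm from u it forces
   x(y) = x(u) s(d(u,y)), where s = 1,0,-1,-1,0,1,... has period 6 and
   vanishes exactly at the k = 1 (mod 3).  If neither pair of arm lengths is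
   1 mod 3, choosing v among u1, u2 makes x vanish on both arms at m1; as m1
   has degree 3 the zero propagates along P(m1,m2), and at m2 the equation,
   together with two consecutive values of s never both vanishing, kills the
   last two arms.  Hence x = 0, a contradiction. *)

Section ArmSeq.
Local Open Scope ring_scope.
Variable F : fieldType.

(* The solution of [s k.+2 = s k.+1 - s k] with [s 0 = 1], [s 1 = 0]; it has period 6. *)
Definition arm_seq (k : nat) : F :=
  match (k %% 6)%N with 0 => 1 | 1 => 0 | 2 => -1 | 3 => -1 | 4 => 0 | _ => 1 end.

Lemma arm_seq0 : arm_seq 0 = 1. Proof. by []. Qed.

Lemma arm_seq1 : arm_seq 1 = 0. Proof. by []. Qed.

Lemma arm_seqSS k : arm_seq k.+2 = arm_seq k.+1 - arm_seq k.
Proof.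
rewrite /arm_seq -(addn2 k) -(addn1 k) -modnDml -(modnDml k 1).
by case: (k %% 6)%N (ltn_pmod k (isT : (0 < 6)%N)) => [|[|[|[|[|[|r]]]]]] //= _;
  ring.
Qed.

Lemma arm_seq_eq0 k : (arm_seq k == 0) = (k %% 3 == 1)%N.
Proof.
rewrite /arm_seq -(modn_dvdm k (isT : (3 %| 6)%N)).
by case: (k %% 6)%N (ltn_pmod k (isT : (0 < 6)%N)) => [|[|[|[|[|[|r]]]]]] //= _;
  rewrite ?oppr_eq0 ?oner_eq0 ?eqxx.
Qed.

Lemma mul_arm_seq_eq0 t k : (k %% 3 != 1)%N -> t * arm_seq k = 0 -> t = 0.
Proof. by rewrite -arm_seq_eq0 => nz /eqP; rewrite mulf_eq0 (negbTE nz) orbF => /eqP. Qed.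

Lemma mul_arm_seqS_eq0 t k : t * arm_seq k = 0 -> t * arm_seq k.+1 = 0 -> t = 0.
Proof.
have [k1 _|k1 h _] := eqVneq (k %% 3)%N 1; last exact: mul_arm_seq_eq0 k1 h.
by apply: mul_arm_seq_eq0; rewrite -addn1 -modnDml k1.
Qed.

End ArmSeq.

Lemma setI1_neq (T : finType) (A B : {set T}) c y z :
  A :&: B = [set c] -> y \in A -> z \in B -> y != c -> y != z.
Proof. by move=> AB yA zB; apply: contra_neq => yz; apply/set1P; rewrite -AB inE yA yz zB. Qed.

Lemma setI0_neq (T : finType) (A B : {set T}) y z :
  A :&: B = set0 -> y \in A -> z \in B -> y != z.
Proof. by move=> AB yA zB; apply/eqP => yz; have := in_set0 y; rewrite -AB inE yA yz zB. Qed.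

Lemma sum_degree n (e : rel 'I_n) :
  (\sum_y degree e y)%N = #|[set p : 'I_n * 'I_n | e p.1 p.2]|.
Proof.
rewrite /degree; under eq_bigr do rewrite -sum1_card big_mkcond /=.
rewrite pair_bigA /= -sum1_card big_mkcond [RHS]big_mkcond /=.
by apply: eq_bigr => p _; rewrite !inE.
Qed.

Section ConnectedGraph.
Variables (n : nat) (e : rel 'I_n).
Hypothesis e_sym : symmetric e.
Hypothesis e_irr : irreflexive e.
Hypothesis e_conn : forall x y, connect e x y.

Lemma reach_mono k k' x y : (k <= k')%N -> reach e k x y -> reach e k' x y.
Proof.
move=> /subnK <-; elim: (k' - k)%N => [//|d IH] h.
by rewrite addSn /= IH.
Qed.

Lemma reach_cat k1 k2 x y z :
  reach e k1 x y -> reach e k2 y z -> reach e (k1 + k2) x z.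
Proof.
elim: k1 x => [|k1 IH] x /=; first by move/eqP ->.
case/orP => [h1 h2|/existsP [w /andP [exw h1]] h2]; first by rewrite IH.
by apply/orP; right; apply/existsP; exists w; rewrite exw IH.
Qed.

Lemma reach_edge x y : e x y -> reach e 1 x y.
Proof. by move=> h /=; apply/orP; right; apply/existsP; exists y; rewrite h /=. Qed.

Lemma reach_sym k x y : reach e k x y -> reach e k y x.
Proof.
elim: k x y => [|k IH] x y; first by rewrite /= eq_sym.
case/orP => [h|/existsP [w /andP [exw h]]]; first by rewrite /= IH.
by rewrite -addn1 (reach_cat (IH _ _ h)) // reach_edge // e_sym.
Qed.

Lemma reach_path x p : path e x p -> reach e (size p) x (last x p).
Proof.
elim: p x => [|y p IH] x /=; first by rewrite eqxx.
case/andP => exy hp; apply/orP; right; apply/existsP; exists y.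
by rewrite exy IH.
Qed.

Lemma reach_lt_card x y : exists2 k, (k < n)%N & reach e k x y.
Proof.
have /connectP [p hp ->] := e_conn x y.
case/shortenP: hp => p' hp' hu _.
exists (size p'); last exact: reach_path.
by move/card_uniqP: hu (max_card (mem (x :: p'))); rewrite card_ord /= => ->.
Qed.

Lemma dist_lt_card x y : (dist e x y < n)%N.
Proof.
have [k kn hk] := reach_lt_card x y.
have : has (fun k => reach e k x y) (iota 0 n).
  by apply/hasP; exists k => //; rewrite mem_iota.
by rewrite has_find size_iota.
Qed.

Lemma dist_reach x y : reach e (dist e x y) x y.
Proof.
have hh : has (fun k => reach e k x y) (iota 0 n).
  by rewrite has_find size_iota dist_lt_card.
by have := nth_find 0 hh; rewrite nth_iota ?dist_lt_card.
Qed.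

Lemma dist_leP x y k : (dist e x y <= k)%N = reach e k x y.
Proof.
apply/idP/idP => [|hk]; first by move/reach_mono; apply; apply: dist_reach.
have [kn|nk] := ltnP k n; last by rewrite ltnW // (leq_trans (dist_lt_card x y)).
rewrite leqNgt; apply/negP => lt.
by have := before_find 0 lt; rewrite nth_iota //= hk.
Qed.

Lemma dist_sym x y : dist e x y = dist e y x.
Proof.
by apply/eqP; rewrite eqn_leq !dist_leP; apply/andP; split; apply/reach_sym/dist_reach.
Qed.

Lemma dist_triangle x y z : (dist e x z <= dist e x y + dist e y z)%N.
Proof. by rewrite dist_leP; apply/reach_cat/dist_reach/dist_reach. Qed.

Lemma dist_eq0 x y : (dist e x y == 0)%N = (x == y).
Proof. by rewrite -leqn0 dist_leP. Qed.

Lemma distxx x : dist e x x = 0%N.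
Proof. by apply/eqP; rewrite dist_eq0. Qed.

Lemma dist_edge x y : e x y -> dist e x y = 1%N.
Proof.
move=> h; apply/eqP; rewrite eqn_leq dist_leP reach_edge //= lt0n dist_eq0.
by apply: contraTneq h => ->; rewrite e_irr.
Qed.

Lemma dist_succ x y k : dist e x y = k.+1 -> exists2 z, e x z & dist e z y = k.
Proof.
move=> h; have := dist_reach x y; rewrite h /=.
case/orP => [hk|/existsP [z /andP [exz hz]]].
  by move: hk; rewrite -dist_leP h ltnn.
exists z => //; apply/eqP; rewrite eqn_leq dist_leP hz /=.
by have := dist_triangle x z y; rewrite h dist_edge.
Qed.

Lemma degree_gt0 y : (1 < n)%N -> (0 < degree e y)%N.
Proof.
move=> n_gt1; have [z zy] : exists z : 'I_n, z != y.
  have [->|h] := eqVneq y (Ordinal n_gt1); last by exists (Ordinal n_gt1); rewrite eq_sym.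
  by exists (Ordinal (ltnW n_gt1)); apply/eqP => /(congr1 val).
case hd: (dist e y z) => [|k]; first by move/eqP: hd; rewrite dist_eq0 eq_sym (negbTE zy).
have [w eyw _] := dist_succ hd.
by apply/card_gt0P; exists w; rewrite inE.
Qed.

Local Notation P := (path_set e).

Lemma mem_path_setl r s : r \in P r s.
Proof. by rewrite inE distxx. Qed.

Lemma mem_path_setr r s : s \in P r s.
Proof. by rewrite inE distxx addn0. Qed.

Lemma path_setC r s : P r s = P s r.
Proof.
by apply/setP => y; rewrite !inE addnC (dist_sym r s) (dist_sym r y) (dist_sym y s).
Qed.

Lemma path_set_next r s y : y \in P r s -> y != s ->
  exists y', [/\ y' \in P r s, e y y' & dist e r y' = (dist e r y).+1].
Proof.
rewrite inE => /eqP hy ys.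
case hd: (dist e y s) => [|k]; first by move/eqP: hd; rewrite dist_eq0 (negbTE ys).
have [z eyz hz] := dist_succ hd.
have := dist_triangle r z s; have := dist_triangle r y z; rewrite (dist_edge eyz).
by exists z; split; rewrite ?inE //; [apply/eqP|]; lia.
Qed.

Lemma path_set_prev r s y : y \in P r s -> y != r ->
  exists y', [/\ y' \in P r s, e y y' & (dist e r y').+1 = dist e r y].
Proof.
rewrite path_setC => hy yr; have [z [hz eyz dz]] := path_set_next hy yr.
exists z; split => //.
move: hy hz dz; rewrite !inE !(dist_sym s) (dist_sym y r) (dist_sym z r) => /eqP h1 /eqP h2.
lia.
Qed.

Lemma path_set_dist_le r s y : y \in P r s -> (dist e r y <= dist e r s)%N.
Proof. by rewrite inE => /eqP <-; apply: leq_addr. Qed.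

Lemma path_set_dist_nbr r s y : y \in P r s -> e y s -> (dist e r y).+1 = dist e r s.
Proof. by rewrite inE => /eqP <- /dist_edge ->; rewrite addn1. Qed.

Definition deg2_interior r s :=
  forall y, y \in P r s -> y != r -> y != s -> degree e y = 2%N.

Lemma nbhd_seq y (s : seq 'I_n) : uniq s -> all (e y) s -> size s = degree e y ->
  [set z | e y z] = [set z in s].
Proof.
move=> s_uniq /allP s_nbr s_size; apply/eqP; rewrite eq_sym eqEcard.
apply/andP; split; first by apply/subsetP => z; rewrite !inE => /s_nbr.
by rewrite [X in (_ <= X)%N]cardsE (card_uniqP s_uniq) s_size.
Qed.

Lemma junction_nbrs a b c m : m != a -> m != b -> m != c ->
  P a m :&: P b m = [set m] -> P a m :&: P m c = [set m] -> P b m :&: P m c = [set m] ->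
  exists a' b' c', [/\ [/\ a' \in P a m, b' \in P b m & c' \in P m c],
                       [/\ e m a', e m b' & e m c'] & uniq [:: a'; b'; c']].
Proof.
move=> ma mb mc Iab Iac Ibc.
have [a' [a'P ma' _]] := path_set_prev (mem_path_setr a m) ma.
have [b' [b'P mb' _]] := path_set_prev (mem_path_setr b m) mb.
have [c' [c'P mc' _]] := path_set_next (mem_path_setl m c) mc.
have nbr_neq z : e m z -> z != m by apply: contraTneq => ->; rewrite e_irr.
have ab := setI1_neq Iab a'P b'P (nbr_neq _ ma').
have ac := setI1_neq Iac a'P c'P (nbr_neq _ ma').
have bc := setI1_neq Ibc b'P c'P (nbr_neq _ mb').
by exists a', b', c'; split; rewrite //= !inE !negb_or ab ac bc.
Qed.

Section Eigenfunction.
Local Open Scope ring_scope.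
Variables (F : fieldType) (x : 'I_n -> F).

Definition lap_eigen1 :=
  forall y, (degree e y)%:R * x y - \sum_(z in [set z | e y z]) x z = x y.

Hypothesis x_eig : lap_eigen1.

Lemma lap_eigen1_nbr_sum y s : uniq s -> all (e y) s -> size s = degree e y ->
  \sum_(z <- s) x z = (size s)%:R * x y - x y.
Proof.
move=> s_uniq s_nbr s_size; rewrite -{2}(x_eig y) (nbhd_seq s_uniq s_nbr s_size) s_size.
rewrite (big_uniq _ s_uniq) opprB addrC subrK.
by apply: eq_bigl => z; rewrite inE.
Qed.

Lemma lap_eigen1_pendant y a : degree e y = 1%N -> e y a -> x a = 0.
Proof.
move=> y1 ya; have := @lap_eigen1_nbr_sum y [:: a] isT; rewrite /= ya y1 => /(_ isT erefl).
by rewrite big_cons big_nil addr0 mul1r subrr.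
Qed.

Lemma lap_eigen1_deg2 y a b : degree e y = 2%N -> e y a -> e y b -> a != b ->
  x a = x y - x b.
Proof.
move=> y2 ya yb ab; have := @lap_eigen1_nbr_sum y [:: a; b].
rewrite /= inE ab ya yb y2 !big_cons big_nil addr0 => /(_ isT isT erefl) h.
by rewrite -[x a](addrK (x b)) h; ring.
Qed.

Lemma lap_eigen1_deg3 y a b c : degree e y = 3%N -> e y a -> e y b -> e y c ->
  uniq [:: a; b; c] -> x a + x b + x c = 2%:R * x y.
Proof.
move=> y3 ya yb yc abc; have := @lap_eigen1_nbr_sum y [:: a; b; c] abc.
rewrite /= ya yb yc y3 !big_cons big_nil addr0 !addrA => /(_ isT erefl) ->; ring.
Qed.

Lemma path_recurrence r s (f : nat -> F) : deg2_interior r s ->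
  (forall j, f j.+2 = f j.+1 - f j) ->
  (forall y, y \in P r s -> (dist e r y <= 1)%N -> x y = f (dist e r y)) ->
  forall y, y \in P r s -> x y = f (dist e r y).
Proof.
move=> int2 fSS init.
suff H j : (forall y, y \in P r s -> dist e r y = j -> x y = f j) /\
           (forall y, y \in P r s -> dist e r y = j.+1 -> x y = f j.+1).
  by move=> y yP; case: (H (dist e r y)) => + _; apply.
elim: j => [|j [IH1 IH2]].
  by split=> y yP dy; rewrite init // dy.
split=> // y yP dy.
have yr : y != r by apply: contraPneq dy => ->; rewrite distxx.
have [z [zP yz dz]] := path_set_prev yP yr.
have zr : z != r by apply: contraPneq dz => ->; rewrite distxx dy.
have [w [wP zw dw]] := path_set_prev zP zr.
have zs : z != s.
  by apply: contraTneq (path_set_dist_le yP) => <-; rewrite -ltnNge -dz.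
have yw : y != w by apply: contraPneq dw => <-; rewrite -dz; lia.
have dz' : dist e r z = j.+1 by apply: succn_inj; rewrite dz.
have dw' : dist e r w = j by apply: succn_inj; rewrite dw dz'.
rewrite (lap_eigen1_deg2 (int2 z zP zr zs) _ zw yw) 1?e_sym //.
by rewrite (IH2 z zP dz') (IH1 w wP dw') fSS.
Qed.

Lemma pendant_arm u m : degree e u = 1%N -> deg2_interior u m ->
  forall y, y \in P u m -> x y = x u * arm_seq F (dist e u y).
Proof.
move=> u1 int2; apply: (path_recurrence (f := fun j => x u * arm_seq F j)) => // [j|y _].
  by rewrite arm_seqSS mulrBr.
case dy: (dist e u y) => [|[|k]] // _.
  by move/eqP: dy; rewrite dist_eq0 => /eqP <-; rewrite arm_seq0 mulr1.
have [z uz /eqP] := dist_succ dy; rewrite dist_eq0 => /eqP <-.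
by rewrite arm_seq1 mulr0 (lap_eigen1_pendant u1 uz).
Qed.

Lemma pendant_arm_eq0 u m : degree e u = 1%N -> deg2_interior u m -> x u = 0 ->
  forall y, y \in P u m -> x y = 0.
Proof. by move=> u1 int2 xu y yP; rewrite (pendant_arm u1 int2 yP) xu mul0r. Qed.

Lemma arm_vanish_across a b m : degree e a = 1%N -> degree e b = 1%N ->
  deg2_interior a m -> deg2_interior b m -> x a = 0 -> (dist e b m %% 3 != 1)%N ->
  x b = 0.
Proof.
move=> a1 b1 inta intb xa hb; apply: (mul_arm_seq_eq0 hb).
rewrite -(pendant_arm b1 intb (mem_path_setr b m)).
exact: pendant_arm_eq0 a1 inta xa _ (mem_path_setr a m).
Qed.

Lemma arms_vanish a b m a' b' : degree e a = 1%N -> degree e b = 1%N ->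
  deg2_interior a m -> deg2_interior b m ->
  a' \in P a m -> e m a' -> b' \in P b m -> e m b' -> x m = 0 -> x a' + x b' = 0 ->
  ~~ ((dist e a m %% 3 == 1) && (dist e b m %% 3 == 1))%N -> x a = 0 /\ x b = 0.
Proof.
move=> a1 b1 inta intb a'P ma' b'P mb' xm sum0.
wlog ha : a b a' b' a1 b1 inta intb a'P ma' b'P mb' sum0 / (dist e a m %% 3 != 1)%N.
  move=> wlog_ha; have [ha|/negbNE ha] := boolP (dist e a m %% 3 != 1)%N.
    exact: (wlog_ha a b a' b').
  rewrite ha /= => hb.
  have sum0' : x b' + x a' = 0 by rewrite addrC.
  have hba : ~~ ((dist e b m %% 3 == 1) && (dist e a m %% 3 == 1))%N by rewrite ha andbT.
  by have [xb xa] := wlog_ha b a b' a' b1 a1 intb inta b'P mb' a'P ma' sum0' hb hba.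
move=> _; have xa : x a = 0.
  by apply: (mul_arm_seq_eq0 ha); rewrite -(pendant_arm a1 inta (mem_path_setr a m)).
have xb' : x b' = 0 by rewrite -sum0 (pendant_arm_eq0 a1 inta xa a'P) add0r.
split=> //; apply: (@mul_arm_seqS_eq0 _ _ (dist e b b')).
  by rewrite -(pendant_arm b1 intb b'P).
rewrite (path_set_dist_nbr b'P) 1?e_sym //.
by rewrite -(pendant_arm b1 intb (mem_path_setr b m)).
Qed.

End Eigenfunction.

Section Configuration.
Variables u1 u2 u3 u4 m1 m2 : 'I_n.
Local Notation us := [:: u1; u2; u3; u4].
Hypothesis edge_count : #|[set p : 'I_n * 'I_n | e p.1 p.2]| = (2 * n.-1)%N.
Hypothesis us_uniq : uniq us.
Hypothesis pendantE : forall x, pendant e x = (x \in us).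
Hypothesis m12 : m1 != m2.
Hypothesis majorE : forall x, major e x = (x \in [:: m1; m2]).

Lemma degree_pendant x : x \in us -> degree e x = 1%N.
Proof. by rewrite -pendantE => /eqP. Qed.

Lemma degree_major x : x \in [:: m1; m2] -> (3 <= degree e x)%N.
Proof. by rewrite -majorE. Qed.

Lemma pendant_neq_major x y : x \in us -> y \in [:: m1; m2] -> x != y.
Proof.
by move=> xu ym; apply: contraTneq (degree_major ym) => <-; rewrite degree_pendant.
Qed.

Lemma degree_other y : y != u1 -> y != u2 -> y != u3 -> y != u4 -> y != m1 -> y != m2 ->
  degree e y = 2%N.
Proof.
move=> yu1 yu2 yu3 yu4 ym1 ym2.
have n_gt1 : (1 < n)%N.
  rewrite -[n]card_ord; apply/card_gt1P; exists u1, u2.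
  by move: us_uniq; rewrite /= !inE => /andP [/norP []].
have : ~~ pendant e y by rewrite pendantE !inE !negb_or yu1 yu2 yu3 yu4.
have : ~~ major e y by rewrite majorE !inE !negb_or ym1 ym2.
have := degree_gt0 y n_gt1.
by rewrite /pendant /major; case: (degree e y) => [|[|[|]]].
Qed.

Let deg_u1 : degree e u1 = 1%N. Proof. by rewrite degree_pendant // !inE eqxx. Qed.
Let deg_u2 : degree e u2 = 1%N. Proof. by rewrite degree_pendant // !inE eqxx ?orbT. Qed.
Let deg_u3 : degree e u3 = 1%N. Proof. by rewrite degree_pendant // !inE eqxx ?orbT. Qed.
Let deg_u4 : degree e u4 = 1%N. Proof. by rewrite degree_pendant // !inE eqxx ?orbT. Qed.

Lemma degree_junctions : degree e m1 = 3%N /\ degree e m2 = 3%N.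
Proof.
have d1 : (3 <= degree e m1)%N by rewrite degree_major // inE eqxx.
have d2 : (3 <= degree e m2)%N by rewrite degree_major // !inE eqxx orbT.
(* Handshake: deg + [pendant] sums to 2(n-1) + 4 = 2n + (deg m1 - 2) + (deg m2 - 2). *)
have deg_split y : (degree e y + (y \in us) =
    2 + (y == m1) * (degree e m1 - 2) + (y == m2) * (degree e m2 - 2))%N.
  have [yu|yu] := boolP (y \in us).
    have /negbTE -> : y != m1 by rewrite pendant_neq_major // inE eqxx.
    have /negbTE -> : y != m2 by rewrite pendant_neq_major // !inE eqxx orbT.
    by rewrite degree_pendant.
  have [->|/negbTE ym1] := eqVneq y m1; first by rewrite (negbTE m12); lia.
  have [->|/negbTE ym2] := eqVneq y m2; first by lia.
  move: yu; rewrite !inE !negb_or => /and4P [yu1 yu2 yu3 yu4].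
  by rewrite degree_other ?(negbT ym1) ?(negbT ym2).
have sum_us : (\sum_(y < n) (y \in us))%N = 4%N.
  by rewrite -big_mkcondr /= sum1_card; move/card_uniqP: us_uniq.
have sum_at (m : 'I_n) c : (\sum_(y < n) (y == m) * c)%N = c.
  by rewrite (bigD1 m) //= eqxx mul1n big1 ?addn0 // => i /negbTE ->.
have : (\sum_y (degree e y + (y \in us)))%N = (2 * n.-1 + 4)%N.
  by rewrite big_split /= sum_degree edge_count sum_us.
rewrite (eq_bigr _ (fun y _ => deg_split y)) !big_split /= !sum_at sum_nat_const card_ord.
by have := ltn_ord u1; lia.
Qed.

Hypothesis cover :
  P u1 m1 :|: P u2 m1 :|: P m1 m2 :|: P u3 m2 :|: P u4 m2 = [set: 'I_n].
Hypothesis I12 : P u1 m1 :&: P u2 m1 = [set m1].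
Hypothesis I1M : P u1 m1 :&: P m1 m2 = [set m1].
Hypothesis I2M : P u2 m1 :&: P m1 m2 = [set m1].
Hypothesis I34 : P u3 m2 :&: P u4 m2 = [set m2].
Hypothesis I3M : P u3 m2 :&: P m1 m2 = [set m2].
Hypothesis I4M : P u4 m2 :&: P m1 m2 = [set m2].
Hypothesis I13 : P u1 m1 :&: P u3 m2 = set0.
Hypothesis I14 : P u1 m1 :&: P u4 m2 = set0.
Hypothesis I23 : P u2 m1 :&: P u3 m2 = set0.
Hypothesis I24 : P u2 m1 :&: P u4 m2 = set0.

Lemma deg2_interior_u1 : deg2_interior u1 m1.
Proof.
move=> y yP yu1 ym1; apply: degree_other => //.
- exact: setI1_neq I12 yP (mem_path_setl _ _) ym1.
- exact: setI0_neq I13 yP (mem_path_setl _ _).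
- exact: setI0_neq I14 yP (mem_path_setl _ _).
- exact: setI1_neq I1M yP (mem_path_setr _ _) ym1.
Qed.

Lemma deg2_interior_u2 : deg2_interior u2 m1.
Proof.
move=> y yP yu2 ym1; apply: degree_other => //.
- by apply: (setI1_neq _ yP (mem_path_setl u1 m1) ym1); rewrite setIC.
- exact: setI0_neq I23 yP (mem_path_setl _ _).
- exact: setI0_neq I24 yP (mem_path_setl _ _).
- exact: setI1_neq I2M yP (mem_path_setr _ _) ym1.
Qed.

Lemma deg2_interior_u3 : deg2_interior u3 m2.
Proof.
move=> y yP yu3 ym2; apply: degree_other => //.
- by rewrite eq_sym (setI0_neq I13 (mem_path_setl _ _) yP).
- by rewrite eq_sym (setI0_neq I23 (mem_path_setl _ _) yP).
- exact: setI1_neq I34 yP (mem_path_setl _ _) ym2.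
- exact: setI1_neq I3M yP (mem_path_setl _ _) ym2.
Qed.

Lemma deg2_interior_u4 : deg2_interior u4 m2.
Proof.
move=> y yP yu4 ym2; apply: degree_other => //.
- by rewrite eq_sym (setI0_neq I14 (mem_path_setl _ _) yP).
- by rewrite eq_sym (setI0_neq I24 (mem_path_setl _ _) yP).
- by apply: (setI1_neq _ yP (mem_path_setl u3 m2) ym2); rewrite setIC.
- exact: setI1_neq I4M yP (mem_path_setl _ _) ym2.
Qed.

Lemma deg2_interior_m1m2 : deg2_interior m1 m2.
Proof.
move=> y yP ym1 ym2; apply: degree_other => //.
- by apply: (setI1_neq _ yP (mem_path_setl u1 m1) ym1); rewrite setIC.
- by apply: (setI1_neq _ yP (mem_path_setl u2 m1) ym1); rewrite setIC.
- by apply: (setI1_neq _ yP (mem_path_setl u3 m2) ym2); rewrite setIC.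
- by apply: (setI1_neq _ yP (mem_path_setl u4 m2) ym2); rewrite setIC.
Qed.

Section ConfigurationEigenvector.
Local Open Scope ring_scope.
Variables (F : fieldType) (x : 'I_n -> F).
Hypothesis x_eig : lap_eigen1 x.

Lemma lap_eigen1_middle_eq0 : x u1 = 0 -> x u2 = 0 -> forall y, y \in P m1 m2 -> x y = 0.
Proof.
move=> xu1 xu2.
have m1u1 : m1 != u1 by rewrite eq_sym pendant_neq_major // !inE eqxx.
have m1u2 : m1 != u2 by rewrite eq_sym pendant_neq_major // !inE eqxx ?orbT.
have [a1 [a2 [c [[a1P a2P cP] [m1a1 m1a2 m1c] nbrs]]]] :=
  junction_nbrs m1u1 m1u2 m12 I12 I1M I2M.
have xm1 := pendant_arm_eq0 x_eig deg_u1 deg2_interior_u1 xu1 (mem_path_setr u1 m1).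
have xa1 := pendant_arm_eq0 x_eig deg_u1 deg2_interior_u1 xu1 a1P.
have xa2 := pendant_arm_eq0 x_eig deg_u2 deg2_interior_u2 xu2 a2P.
have [deg_m1 _] := degree_junctions.
have xc : x c = 0.
  by have := lap_eigen1_deg3 x_eig deg_m1 m1a1 m1a2 m1c nbrs; rewrite xa1 xa2 xm1 mulr0 !add0r.
have nbr0 z : e m1 z -> x z = 0.
  have nbrsE : [set z | e m1 z] = [set z in [:: a1; a2; c]].
    by apply: nbhd_seq; rewrite //= ?m1a1 ?m1a2 ?m1c ?deg_m1.
  move=> m1z; have : z \in [set z | e m1 z] by rewrite inE.
  by rewrite nbrsE !inE => /or3P [] /eqP ->.
apply: (path_recurrence x_eig (f := fun=> 0) deg2_interior_m1m2) => [j|y _].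
  by rewrite subr0.
case dy: (dist e m1 y) => [|[|k]] // _.
  by move/eqP: dy; rewrite dist_eq0 => /eqP <-.
by have [z m1z /eqP] := dist_succ dy; rewrite dist_eq0 => /eqP <-; apply: nbr0.
Qed.

Lemma lap_eigen1_arms34_eq0 : (forall y, y \in P m1 m2 -> x y = 0) ->
  ~~ ((dist e u3 m2 %% 3 == 1) && (dist e u4 m2 %% 3 == 1))%N ->
  x u3 = 0 /\ x u4 = 0.
Proof.
move=> mid0 not_both34.
have m2u3 : m2 != u3 by rewrite eq_sym pendant_neq_major // !inE eqxx ?orbT.
have m2u4 : m2 != u4 by rewrite eq_sym pendant_neq_major // !inE eqxx ?orbT.
have m21 : m2 != m1 by rewrite eq_sym.
have I3M' : P u3 m2 :&: P m2 m1 = [set m2] by rewrite [P m2 m1]path_setC.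
have I4M' : P u4 m2 :&: P m2 m1 = [set m2] by rewrite [P m2 m1]path_setC.
have [a3 [a4 [c [[a3P a4P cP] [m2a3 m2a4 m2c] nbrs]]]] :=
  junction_nbrs m2u3 m2u4 m21 I34 I3M' I4M'.
have xm2 := mid0 m2 (mem_path_setr m1 m2).
have xc : x c = 0 by apply: mid0; rewrite path_setC.
have [_ deg_m2] := degree_junctions.
have sum0 : x a3 + x a4 = 0.
  by have := lap_eigen1_deg3 x_eig deg_m2 m2a3 m2a4 m2c nbrs; rewrite xc xm2 mulr0 addr0.
exact: (arms_vanish x_eig deg_u3 deg_u4 deg2_interior_u3 deg2_interior_u4
  a3P m2a3 a4P m2a4 xm2 sum0 not_both34).
Qed.

Lemma lap_eigen1_eq0 :
  ~~ ((dist e u1 m1 %% 3 == 1) && (dist e u2 m1 %% 3 == 1))%N ->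
  ~~ ((dist e u3 m2 %% 3 == 1) && (dist e u4 m2 %% 3 == 1))%N ->
  x (if (dist e u2 m1 %% 3 != 1)%N then u1 else u2) = 0 ->
  forall y, x y = 0.
Proof.
move=> not_both12 not_both34 xv.
have [xu1 xu2] : x u1 = 0 /\ x u2 = 0.
  case: ifP xv => [d2 xu1|/negbFE d2 xu2]; split => //.
    exact: (arm_vanish_across x_eig deg_u1 deg_u2 deg2_interior_u1 deg2_interior_u2 xu1 d2).
  apply: (arm_vanish_across x_eig deg_u2 deg_u1 deg2_interior_u2 deg2_interior_u1 xu2).
  by move: not_both12; rewrite d2 andbT.
have mid0 := lap_eigen1_middle_eq0 xu1 xu2.
have [xu3 xu4] := lap_eigen1_arms34_eq0 mid0 not_both34.
move=> y; have := in_setT y.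
rewrite -cover !in_setU => /orP [/orP [/orP [/orP [] | ] | ] | ] yP.
- exact: (pendant_arm_eq0 x_eig deg_u1 deg2_interior_u1 xu1 yP).
- exact: (pendant_arm_eq0 x_eig deg_u2 deg2_interior_u2 xu2 yP).
- exact: mid0.
- exact: (pendant_arm_eq0 x_eig deg_u3 deg2_interior_u3 xu3 yP).
- exact: (pendant_arm_eq0 x_eig deg_u4 deg2_interior_u4 xu4 yP).
Qed.

End ConfigurationEigenvector.
End Configuration.
End ConnectedGraph.

Section Spectrum.
Local Open Scope ring_scope.
Local Open Scope sesquilinear_scope.

Lemma laplacian_sym n (e : rel 'I_n) : symmetric e -> (laplacian e)^T = laplacian e.
Proof.
move=> e_sym; apply/matrixP => i j; rewrite !mxE eq_sym.
by have [->|_] := eqVneq j i; rewrite // e_sym.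
Qed.

Lemma lap_eigen1_row n (e : rel 'I_n) (x : 'rV[algC]_n) :
  symmetric e -> irreflexive e -> x *m map_mx ratr (laplacian e) = x ->
  lap_eigen1 e (fun y => x 0 y).
Proof.
move=> e_sym e_irr xL y.
transitivity ((x *m map_mx ratr (laplacian e)) 0 y); last by rewrite xL.
rewrite /laplacian mxE [RHS](bigD1 y) //= !mxE eqxx ratr_nat mulrC; congr (_ + _).
rewrite -sumrN big_mkcond [RHS]big_mkcond /=; apply: eq_bigr => z _.
rewrite !mxE inE; have [->|_] := eqVneq z y; first by rewrite e_irr.
by rewrite /= e_sym; case: (e z y); rewrite ?rmorphN1 ?mulrN1 // rmorph0 mulr0.
Qed.

Lemma char_poly_similar (F : fieldType) n (P A : 'M[F]_n) : P \in unitmx ->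
  char_poly (invmx P *m A *m P) = char_poly A.
Proof.
move=> P_unit; rewrite /char_poly /char_poly_mx.
have -> : 'X%:M - map_mx polyC (invmx P *m A *m P) =
    map_mx polyC (invmx P) *m ('X%:M - map_mx polyC A) *m map_mx polyC P.
  rewrite mulmxBr mulmxBl -!map_mxM mul_mx_scalar -scalemxAl -map_mxM mulVmx //.
  by rewrite map_mx1 scalemx1.
rewrite !det_mulmx mulrC mulrA -det_mulmx -map_mxM mulmxV //.
by rewrite map_mx1 det1 mul1r.
Qed.

Lemma mup_diag_ge2 (F : fieldType) n (d : 'rV[F]_n) a :
  (2 <= mup a (\prod_(i < n) ('X - (d 0 i)%:P)))%N ->
  exists i j, [/\ i != j, d 0 i = a & d 0 j = a].
Proof.
rewrite -(big_map (fun i => d 0 i) xpredT (fun c => 'X - c%:P)) mu_prod_XsubC count_map.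
have -> : count (preim (fun i => d 0 i) (pred1 a)) (index_enum 'I_n) =
    #|[set i | d 0 i == a]|.
  rewrite cardE /enum_mem size_filter /= [index_enum _]unlock.
  by apply: eq_count => i /=; rewrite inE.
by case/card_gt1P => i [j []]; rewrite !inE => /eqP di /eqP dj ij; exists i, j.
Qed.

Lemma unitmx_row_comb_eq0 (F : fieldType) n (P : 'M[F]_n) i j (a b : F) :
  P \in unitmx -> i != j -> a *: row i P + b *: row j P = 0 -> b = 0.
Proof.
move=> P_unit ij comb0.
have : a *: delta_mx 0 i + b *: delta_mx 0 j = 0 :> 'rV_n.
  by rewrite -[LHS]mulmx1 -(mulmxV P_unit) mulmxA mulmxDl -!scalemxAl -!rowE comb0 mul0mx.
move/matrixP/(_ 0 j); rewrite !mxE !eqxx eq_sym (negbTE ij) /=.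
by rewrite mulr0 mulr1 add0r.
Qed.

Lemma sym_eigenvec_vanishing n (L : 'M[rat]_n) a : L^T = L ->
  (2 <= mup a (char_poly L))%N ->
  forall v, exists x : 'rV[algC]_n,
    [/\ x != 0, x *m map_mx ratr L = ratr a *: x & x 0 v = 0].
Proof.
move=> L_sym a_mult v; set A := map_mx ratr L.
have A_normal : A \is normalmx.
  apply/normalmxP; suff -> : A ^t* = A by [].
  apply/matrixP => i j; rewrite !mxE.
  have -> : L j i = L i j by rewrite -{1}L_sym mxE.
  by rewrite conj_Creal ?rpred_rat.
have A_mult : (2 <= mup (ratr a) (char_poly A))%N.
  have L_cp : char_poly L != 0 by rewrite monic_neq0 ?char_poly_monic.
  rewrite -map_char_poly mup_geq ?map_poly_eq0 // -map_polyXsubC -rmorphXn dvdp_map.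
  by rewrite -mup_geq.
move/orthomx_spectralP: A_normal; set P := spectralmx A; set d := spectral_diag A => AE.
have P_unit : P \in unitmx := spectral_unit A.
have [i [j [ij di dj]]] : exists i j, [/\ i != j, d 0 i = ratr a & d 0 j = ratr a].
  apply: mup_diag_ge2; move: A_mult.
  rewrite AE char_poly_similar // char_poly_trig ?diag_mx_is_trig //.
  by under eq_bigr do rewrite mxE eqxx mulr1n.
have PA : P *m A = diag_mx d *m P by rewrite {1}AE !mulmxA mulmxV // mul1mx.
have row_eigen k : d 0 k = ratr a -> row k P *m A = ratr a *: row k P.
  by move=> dk; rewrite rowE -mulmxA PA mulmxA -rowE row_diag_mx dk -scalemxAl -rowE.
have [Piv0|Piv] := eqVneq (P i v) 0.
  exists (row i P); split; rewrite ?row_eigen ?mxE //.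
  apply/eqP => Pi0; have := @unitmx_row_comb_eq0 _ _ _ j i 0 1 P_unit.
  by rewrite eq_sym ij Pi0 scaler0 scale0r addr0 => /(_ isT erefl)/eqP; rewrite oner_eq0.
exists (P j v *: row i P - P i v *: row j P); split.
- apply/eqP; rewrite -scaleNr => /(unitmx_row_comb_eq0 P_unit ij)/eqP.
  by rewrite oppr_eq0 (negbTE Piv).
- by rewrite mulmxBl -!scalemxAl !row_eigen // scalerBr !scalerA !(mulrC (ratr a)).
- by rewrite !mxE mulrC subrr.
Qed.
End Spectrum.

Theorem mainTheorem13 (n : nat) (e : rel 'I_n)
    (u1 u2 u3 u4 m1 m2 : 'I_n) :
  is_tree e ->
  uniq [:: u1; u2; u3; u4] ->
  (forall x, pendant e x = (x \in [:: u1; u2; u3; u4])) ->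
  m1 != m2 ->
  (forall x, major e x = (x \in [:: m1; m2])) ->
  (* T is the union of the five paths *)
  path_set e u1 m1 :|: path_set e u2 m1 :|: path_set e m1 m2
    :|: path_set e u3 m2 :|: path_set e u4 m2 = [set: 'I_n] ->
  (* gluing at m1 and m2; the five paths otherwise disjoint *)
  path_set e u1 m1 :&: path_set e u2 m1 = [set m1] ->
  path_set e u1 m1 :&: path_set e m1 m2 = [set m1] ->
  path_set e u2 m1 :&: path_set e m1 m2 = [set m1] ->
  path_set e u3 m2 :&: path_set e u4 m2 = [set m2] ->
  path_set e u3 m2 :&: path_set e m1 m2 = [set m2] ->
  path_set e u4 m2 :&: path_set e m1 m2 = [set m2] ->
  path_set e u1 m1 :&: path_set e u3 m2 = set0 ->
  path_set e u1 m1 :&: path_set e u4 m2 = set0 ->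
  path_set e u2 m1 :&: path_set e u3 m2 = set0 ->
  path_set e u2 m1 :&: path_set e u4 m2 = set0 ->
  (2 <= eig_mult e 1)%N ->
  ((dist e u1 m1 %% 3 == 1) && (dist e u2 m1 %% 3 == 1))%N \/
  ((dist e u3 m2 %% 3 == 1) && (dist e u4 m2 %% 3 == 1))%N.
Proof.
move=> [[e_sym e_irr] e_conn edges] us_uniq pendantE m12 majorE cover
  I12 I1M I2M I34 I3M I4M I13 I14 I23 I24 mult1.
apply/orP; apply: contraT; rewrite negb_or => /andP [not_both12 not_both34].
(* x(u1) = 0 forces x(u2) = 0 through m1 unless d(u2,m1) = 1 mod 3. *)
pose v := if (dist e u2 m1 %% 3 != 1)%N then u1 else u2.
have [x [x_neq0 xL xv]] := sym_eigenvec_vanishing (laplacian_sym e_sym) mult1 v.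
rewrite rmorph1 scale1r in xL.
have x_eq0 := lap_eigen1_eq0 e_sym e_irr e_conn edges us_uniq pendantE m12 majorE cover
  I12 I1M I2M I34 I3M I4M I13 I14 I23 I24 (lap_eigen1_row e_sym e_irr xL)
  not_both12 not_both34 xv.
by case/eqP: x_neq0; apply/rowP => i; rewrite x_eq0 mxE.
Qed.
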